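(* Let $\Lambda$ be a well-founded semilattice. Then every nonprincipal strongly productive ultrafilter on $\Lambda$ is regular.
   Context: A semilattice is a commutative semigroup in which every element is idempotent, ordered by $x\le y$ iff $xy=x$; it is well-founded if every nonempty subset has a minimal element. For a sequence $\vec{x}=(x_n)_{n\in\omega}$, $\mathrm{FP}(\vec{x})$ is the set of all products $\prod_{i\in a}x_i$ with $a$ a finite nonempty subset of $\omega$, and $\mathrm{FP}_1(\vec{x})=\mathrm{FP}((x_{n+1})_n)$. An ultrafilter $q$ is strongly productive if every $A\in q$ contains some $\mathrm{FP}(\vec{x})\in q$. A nonprincipal strongly productive ultrafilter $q$ is regular if there is $B\in q$ such that for every sequence $\vec{x}$ with $\mathrm{FP}(\vec{x})\subseteq B$, the set $x_0\mathrm{FP}_1(\vec{x})$ does not belong to $q$. *)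

From Stdlib Require Import List Arith Sorting.Sorted.
Import ListNotations.
Set Implicit Arguments.

Record semilattice (T : Type) (op : T -> T -> T) : Prop := {
  sl_assoc : forall x y z, op x (op y z) = op (op x y) z;
  sl_comm  : forall x y, op x y = op y x;
  sl_idem  : forall x, op x x = x
}.

Definition sl_le (T : Type) (op : T -> T -> T) (x y : T) : Prop := op x y = x.

Definition sl_well_founded (T : Type) (op : T -> T -> T) : Prop :=
  forall S : T -> Prop, (exists x, S x) ->
    exists m, S m /\ forall y, S y -> sl_le op y m -> y = m.

Definition prod_list (T : Type) (op : T -> T -> T) (x : nat -> T) (i0 : nat) (a : list nat) : T :=
  fold_left (fun acc j => op acc (x j)) a (x i0).

(* FP(x) = products over finite nonempty subsets of omega; a finite nonempty subset
   is represented by the strictly increasing list of its elements. *)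
Definition FP (T : Type) (op : T -> T -> T) (x : nat -> T) : T -> Prop :=
  fun y => exists (i0 : nat) (a : list nat),
    StronglySorted lt (i0 :: a) /\ y = prod_list op x i0 a.

Definition FP1 (T : Type) (op : T -> T -> T) (x : nat -> T) : T -> Prop :=
  FP op (fun n => x (S n)).

Definition ultrafilter (T : Type) (q : (T -> Prop) -> Prop) : Prop :=
  q (fun _ => True) /\
  ~ q (fun _ => False) /\
  (forall A B : T -> Prop, q A -> (forall t, A t -> B t) -> q B) /\
  (forall A B : T -> Prop, q A -> q B -> q (fun t => A t /\ B t)) /\
  (forall A : T -> Prop, q A \/ q (fun t => ~ A t)).

Definition principal (T : Type) (q : (T -> Prop) -> Prop) : Prop :=
  exists x : T, forall A : T -> Prop, q A <-> A x.

Definition strongly_productive (T : Type) (op : T -> T -> T) (q : (T -> Prop) -> Prop) : Prop :=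
  forall A : T -> Prop, q A ->
    exists x : nat -> T, (forall t, FP op x t -> A t) /\ q (FP op x).

Definition regular (T : Type) (op : T -> T -> T) (q : (T -> Prop) -> Prop) : Prop :=
  ~ principal q /\ strongly_productive op q /\
  exists B : T -> Prop, q B /\
    forall x : nat -> T, (forall t, FP op x t -> B t) ->
      ~ q (fun t => exists y, FP1 op x y /\ t = op (x 0) y).

(* Write [down t] for the principal down-set { s | s <= t }.  The whole proof
   rests on one observation: since x0 * y <= x0 in a semilattice, the set
   x0 FP_1(x) is contained in [down x0]; so if it belongs to q, then so does
   [down x0].  Call t "q-bounding" when [down t] belongs to q.
   - If no element is q-bounding, the witness B = T works: a sequence with
     x0 FP_1(x) in q would make x0 q-bounding.
   - Otherwise well-foundedness gives a minimal q-bounding element m, and the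
     witness is B = [down m] minus {m}, which lies in q because a nonprincipal
     ultrafilter never contains a singleton.  If FP(x) is inside B, then
     x0 < m, so x0 cannot be q-bounding by minimality of m. *)

From Stdlib Require Import List Sorting.Sorted Classical.
Import ListNotations.
Set Implicit Arguments.

Definition regularity_witness (T : Type) (op : T -> T -> T)
    (q : (T -> Prop) -> Prop) (B : T -> Prop) : Prop :=
  q B /\
  forall x : nat -> T, (forall t, FP op x t -> B t) ->
    ~ q (fun t => exists y, FP1 op x y /\ t = op (x 0) y).

Section Ultrafilters.

Variable T : Type.
Variable q : (T -> Prop) -> Prop.
Hypothesis q_uf : ultrafilter q.

Lemma uf_mono (A B : T -> Prop) : q A -> (forall t, A t -> B t) -> q B.
Proof. destruct q_uf as [_ [_ [Hup _]]]. apply Hup. Qed.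

Lemma uf_singleton_principal (m : T) : q (fun t => t = m) -> principal q.
Proof.
  destruct q_uf as [_ [Hempty [_ [Hinter _]]]].
  intro Hm. exists m. intro A. split.
  - intro HA. apply NNPP. intro HnA. apply Hempty.
    eapply uf_mono; [exact (Hinter _ _ HA Hm) |]. intros t [HAt ->]. contradiction.
  - intro HAm. eapply uf_mono; [exact Hm |]. intros t ->. exact HAm.
Qed.

Lemma uf_remove_point (A : T -> Prop) (m : T) :
  ~ principal q -> q A -> q (fun t => A t /\ t <> m).
Proof.
  destruct q_uf as [_ [_ [_ [Hinter Hult]]]].
  intros Hnp HA. destruct (Hult (fun t => t = m)) as [Hm | Hnm].
  - exfalso. exact (Hnp (uf_singleton_principal Hm)).
  - exact (Hinter _ _ HA Hnm).
Qed.

End Ultrafilters.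

Section Semilattices.

Variable T : Type.
Variable op : T -> T -> T.
Hypothesis op_sl : semilattice op.

Definition down (t : T) : T -> Prop := fun s => sl_le op s t.

Lemma sl_mul_le_left (a b : T) : sl_le op (op a b) a.
Proof.
  destruct op_sl as [Hassoc Hcomm Hidem]. unfold sl_le.
  rewrite <- Hassoc, (Hcomm b a), Hassoc, Hidem. reflexivity.
Qed.

Lemma FP_head (x : nat -> T) : FP op x (x 0).
Proof. exists 0, []. split; [repeat constructor | reflexivity]. Qed.

Variable q : (T -> Prop) -> Prop.
Hypothesis q_uf : ultrafilter q.

(* The set x0 FP_1(x) lies below x0, so if it is in q, so is [down (x 0)]. *)
Lemma shifted_products_bounded (x : nat -> T) :
  q (fun t => exists y, FP1 op x y /\ t = op (x 0) y) -> q (down (x 0)).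
Proof.
  intro Hq. eapply uf_mono; [exact q_uf | exact Hq |].
  intros t [y [_ ->]]. apply sl_mul_le_left.
Qed.

Lemma witness_without_bounding :
  ~ (exists t, q (down t)) -> regularity_witness op q (fun _ => True).
Proof.
  destruct q_uf as [Htop _].
  intro Hno. split; [exact Htop |].
  intros x _ Hq. apply Hno. exists (x 0).
  exact (shifted_products_bounded Hq).
Qed.

Lemma witness_below_minimal_bounding (m : T) :
  ~ principal q -> q (down m) ->
  (forall y, q (down y) -> sl_le op y m -> y = m) ->
  regularity_witness op q (fun t => down m t /\ t <> m).
Proof.
  intros Hnp Hm Hmin. split; [apply uf_remove_point; assumption |].
  intros x HB Hq.
  destruct (HB _ (FP_head x)) as [Hx0_le Hx0_ne].
  apply Hx0_ne, Hmin; [exact (shifted_products_bounded Hq) | exact Hx0_le].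
Qed.

End Semilattices.

Theorem mainTheorem13 (T : Type) (op : T -> T -> T) :
  semilattice op -> sl_well_founded op ->
  forall q : (T -> Prop) -> Prop,
    ultrafilter q -> ~ principal q -> strongly_productive op q ->
    regular op q.
Proof.
  intros Hsl Hwf q Huf Hnp Hsp.
  split; [exact Hnp |]. split; [exact Hsp |].
  assert (Hwitness : exists B, regularity_witness op q B).
  { destruct (classic (exists t, q (down op t))) as [Hbounding | Hno].
    - destruct (Hwf _ Hbounding) as [m [Hm Hmin]].
      eexists. exact (witness_below_minimal_bounding Hsl Huf Hnp Hm Hmin).
    - eexists. exact (witness_without_bounding Hsl Huf Hno). }
  exact Hwitness.
Qed.
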